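(* For all $x,y\in\mathbb{C}$ and all integers $n\ge 0$, \[ \sum_{k=0}^n(-1)^k x^{n-k}\big(L_{k+1}(y)+(xy-2)F_k(y)\big)=(-1)^n y\,F_{n+1}(y) \] and \[ \sum_{k=0}^n(-1)^k x^{n-k}\big((y^2+4)F_{k+1}(y)+(xy-2)L_k(y)\big)=(-1)^n y\,L_{n+1}(y)+2y\,x^{n+1}. \]
   Context: The Fibonacci polynomials $F_n(y)$ and Lucas polynomials $L_n(y)$ are defined by $F_0(y)=0$, $F_1(y)=1$, $L_0(y)=2$, $L_1(y)=y$ and $W_n(y)=yW_{n-1}(y)+W_{n-2}(y)$ for $n\ge2$ (for $W=F$ and $W=L$). *)

From HB Require Import structures.
From mathcomp Require Import all_boot all_order all_algebra.
From mathcomp Require Import complex.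
From mathcomp Require Import Rstruct.
From Stdlib Require Import Reals.
Set Implicit Arguments. Unset Strict Implicit. Unset Printing Implicit Defensive.
Import GRing.Theory.
Local Open Scope ring_scope.

Notation CC := (complex.complex Rdefinitions.R).

Fixpoint fib_pair {K : comNzRingType} (n : nat) : {poly K} * {poly K} :=
  match n with
  | 0 => (0, 1)
  | n'.+1 => let p := fib_pair n' in (p.2, 'X * p.2 + p.1)
  end.
Definition fibP {K : comNzRingType} (n : nat) : {poly K} := (fib_pair n).1.

Fixpoint luc_pair {K : comNzRingType} (n : nat) : {poly K} * {poly K} :=
  match n with
  | 0 => (2%:R%:P, 'X)
  | n'.+1 => let p := luc_pair n' in (p.2, 'X * p.2 + p.1)
  end.
Definition lucP {K : comNzRingType} (n : nat) : {poly K} := (luc_pair n).1.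

(* Both sums have the shape S_n = sum_k (-1)^k x^(n-k) a_k, so they are
   characterised by S_0 = a_0 and S_(n+1) = x S_n + (-1)^(n+1) a_(n+1).
   The closed forms satisfy this recurrence once the Lucas polynomials are
   expressed through Fibonacci ones, L_n = 2 F_(n+1) - y F_n: the terms in x
   cancel and what remains is the Fibonacci recurrence. *)
From mathcomp Require Import all_boot all_order all_algebra.
From mathcomp Require Import complex Rstruct.
From mathcomp Require Import ring.
Import GRing.Theory.
Local Open Scope ring_scope.

Lemma alt_sum_eq_of_rec {R : comPzRingType} (x : R) (a s : nat -> R) n :
  s 0 = a 0 -> (forall m, s m.+1 = x * s m + (-1) ^+ m.+1 * a m.+1) ->
  \sum_(0 <= k < n.+1) (-1) ^+ k * x ^+ (n - k) * a k = s n.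
Proof.
move=> s0 sS; elim: n => [|n IH]; first by rewrite big_nat1 s0 !expr0 !mul1r.
rewrite big_nat_recr //= subnn expr0 mulr1 sS -IH big_distrr /=.
congr (_ + _); apply: eq_big_nat => k /andP [_ ltkn].
by rewrite subSn // exprS mulrCA !mulrA.
Qed.

Section FibonacciLucas.

Variable K : comNzRingType.

Lemma fibPSS n : fibP n.+2 = 'X * fibP n.+1 + fibP n :> {poly K}.
Proof. by []. Qed.

Lemma lucPSS n : lucP n.+2 = 'X * lucP n.+1 + lucP n :> {poly K}.
Proof. by []. Qed.

Lemma lucP_fibP n : lucP n = fibP n.+1 *+ 2 - 'X * fibP n :> {poly K}.
Proof.
suff: lucP n = fibP n.+1 *+ 2 - 'X * fibP n :> {poly K} /\
      lucP n.+1 = fibP n.+2 *+ 2 - 'X * fibP n.+1 :> {poly K} by case.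
elim: n => [|n [IH0 IH1]].
  rewrite /lucP /fibP /= polyC_natr; split; ring.
by split=> //; rewrite lucPSS fibPSS IH0 IH1 fibPSS; ring.
Qed.

Lemma lucPS_fibP n : lucP n.+1 = 'X * fibP n.+1 + fibP n *+ 2 :> {poly K}.
Proof. by rewrite lucP_fibP fibPSS; ring. Qed.

Lemma horner_fibP0 (y : K) : (fibP 0).[y] = 0.
Proof. exact: horner0. Qed.

Lemma horner_fibP1 (y : K) : (fibP 1).[y] = 1.
Proof. exact: hornerC. Qed.

Variables x y : K.

Lemma alt_sum_lucP_fibP n :
  \sum_(0 <= k < n.+1)
      (-1) ^+ k * x ^+ (n - k) *
      ((lucP k.+1).[y] + (x * y - 2%:R) * (fibP k).[y])
    = (-1) ^+ n * y * (fibP n.+1).[y].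
Proof.
apply: (alt_sum_eq_of_rec x _
  (fun n => (-1) ^+ n * y * (fibP n.+1).[y])) => [|m].
  rewrite lucPS_fibP !(hornerD, hornerM, hornerMn, hornerX).
  by rewrite horner_fibP0 horner_fibP1; ring.
by rewrite lucPS_fibP fibPSS !(hornerD, hornerM, hornerMn, hornerX) exprS; ring.
Qed.

Lemma alt_sum_fibP_lucP n :
  \sum_(0 <= k < n.+1)
      (-1) ^+ k * x ^+ (n - k) *
      ((y ^+ 2 + 4%:R) * (fibP k.+1).[y] + (x * y - 2%:R) * (lucP k).[y])
    = (-1) ^+ n * y * (lucP n.+1).[y] + 2%:R * y * x ^+ n.+1.
Proof.
apply: (alt_sum_eq_of_rec x _
  (fun n => (-1) ^+ n * y * (lucP n.+1).[y] + 2%:R * y * x ^+ n.+1)) => [|m].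
  rewrite !lucP_fibP fibPSS !(hornerD, hornerN, hornerM, hornerMn, hornerX).
  by rewrite horner_fibP0 horner_fibP1; ring.
rewrite !lucP_fibP !fibPSS !(hornerD, hornerN, hornerM, hornerMn, hornerX).
by rewrite !exprS; ring.
Qed.

End FibonacciLucas.

Theorem proposition3 (x y : CC) (n : nat) :
  \sum_(0 <= k < n.+1)
      (-1) ^+ k * x ^+ (n - k) *
      ((lucP k.+1).[y] + (x * y - 2%:R) * (fibP k).[y])
    = (-1) ^+ n * y * (fibP n.+1).[y]
  /\
  \sum_(0 <= k < n.+1)
      (-1) ^+ k * x ^+ (n - k) *
      ((y ^+ 2 + 4%:R) * (fibP k.+1).[y] + (x * y - 2%:R) * (lucP k).[y])
    = (-1) ^+ n * y * (lucP n.+1).[y] + 2%:R * y * x ^+ n.+1.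
Proof. by split; [apply: alt_sum_lucP_fibP | apply: alt_sum_fibP_lucP]. Qed.
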